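(* Let the premiums $\{X_n, n\geq 1\}$ and the claims $\{Y_n, n\geq 1\}$ be sequences of nonnegative, identically distributed, independent random variables with finite expectations, and let the rates of interest $\{I_n, n\geq 1\}$ be a sequence of i.i.d. nonnegative random variables with finite expectations. Suppose that the sequences $\{X_n\}$, $\{Y_n\}$, $\{I_n\}$ are mutually independent. For $u\geq 0$ define $U_0=u$, $U_n=U_{n-1}(1+I_n)+X_n-Y_n$ for $n\geq 1$, and $\Psi(u)=\mathbb{P}\big(\bigcup_{n=1}^\infty\{U_n<0\}\big)$. If there exists a positive real number $R$ satisfying $$\mathbb{E}\Big(e^{R\left(Y_1-X_1\right)}\Big)\leq 1,$$ then $\Psi(u)\leq e^{-Ru}$ for all $u>0$. *)

From mathcomp Require Import all_boot all_order all_algebra.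
From mathcomp Require Import all_classical all_reals all_analysis.
Set Implicit Arguments. Unset Strict Implicit. Unset Printing Implicit Defensive.
Import Order.TTheory GRing.Theory Num.Theory.
Local Open Scope classical_set_scope.
Local Open Scope ring_scope.

Definition mutually_independent d (T : measurableType d) (R : realType)
  (P : probability T R) (I : eqType) (F : I -> T -> R) : Prop :=
  forall (J : seq I) (B : I -> set R),
    uniq J -> (forall j, measurable (B j)) ->
    P (\bigcap_(j in [set` J]) (F j @^-1` B j)) =
    (\prod_(j <- J) P (F j @^-1` B j))%E.

Definition identically_distributed d (T : measurableType d) (R : realType)
  (P : probability T R) (F : nat -> T -> R) : Prop :=
  forall n (B : set R), measurable B -> P (F n @^-1` B) = P (F 0%N @^-1` B).

(* The surplus process; index shift: X k, Y k, I k stand for X_{k+1}, ... *)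
Fixpoint surplus (T : Type) (R : realType) (u : R) (X Y I : nat -> T -> R)
  (n : nat) (w : T) : R :=
  match n with
  | 0%N => u
  | k.+1 => surplus u X Y I k w * (1 + I k w) + X k w - Y k w
  end.

Definition ruin_prob d (T : measurableType d) (R : realType)
  (P : probability T R) (u : R) (X Y I : nat -> T -> R) : \bar R :=
  P (\bigcup_(n in [set: nat]) [set w | surplus u X Y I n.+1 w < 0]).

Definition join3 (T : Type) (R : Type) (X Y I : nat -> T -> R)
  (k : nat + nat + nat) : T -> R :=
  match k with
  | inl (inl n) => X n
  | inl (inr n) => Y n
  | inr n => I n
  end.

From mathcomp Require Import all_boot all_order all_algebra.
From mathcomp Require Import all_classical all_reals all_analysis.
From mathcomp Require Import measurable_realfun.
From mathcomp Require Import lra.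
Import Order.TTheory GRing.Theory Num.Theory.
Local Open Scope classical_set_scope.
Local Open Scope ring_scope.

(* Interest rates are nonnegative, so as long as the net loss
   W_n = sum_(k < n) (Y_k - X_k) has stayed below u, the surplus is at least
   u - W_n >= 0: ruin forces the random walk W to exceed u.  Since the increment
   Y_N - X_N is independent of the past and E exp(Rc (Y_N - X_N)) <= 1, the
   process exp(Rc W_N), frozen at exp(Rc u) once W has passed u, has expectation
   at most 1 for every N; hence W passes u by time N with probability at most
   exp(-Rc u), and continuity from below of P extends this to all times.
   Independence is used through the sigma-algebras generated by disjoint finite
   subfamilies of (X, Y, I), which are independent by a pi-lambda argument. *)

Section independent_sub_sigma_algebras.
Context {d} {T : measurableType d} {R : realType} (P : probability T R).

Lemma measurable_id_sub_sigma {G : set (set T)} :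
  <<s G >> `<=` measurable ->
  measurable_fun setT (id : T -> g_sigma_algebraType G).
Proof. by move=> sGm _ B mB; rewrite setTI; exact: sGm. Qed.

Lemma measurable_fun_sub_sigma {G : set (set T)} {f : T -> R} :
  <<s G >> `<=` measurable ->
  measurable_fun setT (f : g_sigma_algebraType G -> R) -> measurable_fun setT f.
Proof.
by move=> sGm mf _ B mB; rewrite setTI; apply: sGm; rewrite -[_ @^-1` _]setTI; exact: mf.
Qed.

Lemma indep_sigma_of_setI_closed {C G : set (set T)} :
  C `<=` measurable -> setI_closed G -> <<s G >> `<=` measurable ->
  (forall A B, C A -> G B -> P (A `&` B) = (P A * P B)%E) ->
  forall A B, C A -> <<s G >> B -> P (A `&` B) = (P A * P B)%E.
Proof.
move=> Cm GI sGm CG A B CA; have mA := Cm _ CA.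
have PA_fin : P A \is a fin_num by rewrite fin_num_measure.
apply: (@dynkin_induction _ (g_sigma_algebraType G) G
  (fun B => P (A `&` B) = (P A * P B)%E)) => //.
- by rewrite setIT probability_setT mule1.
- by move=> S; exact: CG.
- move=> S /sGm mS hS.
  rewrite -setDE measureD //; last by rewrite -ge0_fin_numE.
  by rewrite probability_setC // muleBr ?mule1 -?hS.
- move=> F /(_ _)/sGm mF tF hF.
  rewrite setI_bigcupr !measure_bigcup //; last first.
  + apply/trivIsetP => i j _ _ ij.
    by rewrite setIACA setIid; move/trivIsetP: tF => -> //; rewrite setI0.
  + by move=> i _; exact: measurableI.
  rewrite (eq_eseriesr (fun i _ => hF i)).
  by move: PA_fin; case: (P A) => [a _| |] //; rewrite nneseriesZl.
Qed.

Lemma ge0_integralM_indep {G1 G2 : set (set T)} {h g : T -> R} :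
  <<s G1 >> `<=` measurable -> <<s G2 >> `<=` measurable ->
  (forall A B, <<s G1 >> A -> <<s G2 >> B -> P (A `&` B) = (P A * P B)%E) ->
  (forall x, 0 <= h x) -> (forall x, 0 <= g x) ->
  measurable_fun setT (h : g_sigma_algebraType G1 -> R) ->
  measurable_fun setT (g : g_sigma_algebraType G2 -> R) ->
  (\int[P]_x (h x * g x)%:E = \int[P]_x (h x)%:E * \int[P]_x (g x)%:E)%E.
Proof.
move=> sG1m sG2m indG h0 g0 mh mg.
have mi1 := measurable_id_sub_sigma sG1m; have mi2 := measurable_id_sub_sigma sG2m.
pose i1 : {mfun T >-> g_sigma_algebraType G1} := mfun_Sub (mem_set mi1).
pose i2 : {mfun T >-> g_sigma_algebraType G2} := mfun_Sub (mem_set mi2).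
pose ij : {mfun T >-> (g_sigma_algebraType G1 * g_sigma_algebraType G2)%type} :=
  mfun_Sub (mem_set (measurable_fun_pair mi1 mi2)).
pose hg (z : (g_sigma_algebraType G1 * g_sigma_algebraType G2)%type) :=
  h z.1 * g z.2.
have mhg : measurable_fun setT hg.
  apply: measurable_funM.
  - exact: measurableT_comp mh measurable_fst.
  - exact: measurableT_comp mg measurable_snd.
have hg0 z : 0 <= hg z by rewrite mulr_ge0.
have law_ij : forall A, measurable A ->
    ((distribution P i1 \x distribution P i2)%E A = distribution P ij A).
  apply: product_measure_unique => A1 B1 mA1 mB1.
  exact: (indG A1 B1 mA1 mB1).
have law_i1 : (\int[distribution P i1]_x (h x)%:E = \int[P]_x (h x)%:E)%E.
  by rewrite ge0_integral_distribution //; exact/measurable_EFinP.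
have law_i2 : (\int[distribution P i2]_x (g x)%:E = \int[P]_x (g x)%:E)%E.
  by rewrite ge0_integral_distribution //; exact/measurable_EFinP.
transitivity (\int[distribution P ij]_z (hg z)%:E)%E.
  by rewrite ge0_integral_distribution //; exact/measurable_EFinP.
rewrite -(eq_measure_integral _ (fun A mA _ => law_ij A mA)).
rewrite fubini_tonelli1 //; last exact/measurable_EFinP.
rewrite -law_i1 -law_i2 -ge0_integralZr //; last 3 first.
- exact/measurable_EFinP.
- by move=> x _; rewrite lee_fin.
- by apply: integral_ge0 => y _; rewrite lee_fin.
apply: eq_integral => x _; rewrite /fubini_F /hg /=.
under eq_integral do rewrite EFinM.
rewrite ge0_integralZl //.
- exact/measurable_EFinP.
- by move=> y _; rewrite lee_fin.
- by rewrite lee_fin.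
Qed.

Lemma ge0_integral_comp_eq_law {U V : T -> R} {phi : R -> R} :
  measurable_fun setT U -> measurable_fun setT V ->
  measurable_fun setT phi -> (forall x, 0 <= phi x) ->
  (forall B, measurable B -> P (U @^-1` B) = P (V @^-1` B)) ->
  (\int[P]_x (phi (U x))%:E = \int[P]_x (phi (V x))%:E)%E.
Proof.
move=> mU mV mphi phi0 eqUV.
pose U' : {mfun T >-> R} := mfun_Sub (mem_set mU).
pose V' : {mfun T >-> R} := mfun_Sub (mem_set mV).
have mphiE : measurable_fun setT (EFin \o phi) by exact/measurable_EFinP.
have lawU : (\int[distribution P U']_y (phi y)%:E = \int[P]_x (phi (U x))%:E)%E.
  exact: ge0_integral_distribution.
have lawV : (\int[distribution P V']_y (phi y)%:E = \int[P]_x (phi (V x))%:E)%E.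
  exact: ge0_integral_distribution.
rewrite -lawU -lawV; apply: eq_measure_integral => A mA _; exact: eqUV.
Qed.

End independent_sub_sigma_algebras.

Section cylinder_sets.
Context {d} {T : measurableType d} {R : realType} (P : probability T R)
  {I : eqType} (F : I -> T -> R).
Hypothesis mF : forall j, measurable_fun setT (F j).
Hypothesis indF : mutually_independent P F.

Definition cylinder (S : seq I) : set (set T) :=
  [set \bigcap_(j in [set` S]) (F j @^-1` B j) |
     B in [set B : I -> set R | forall j, measurable (B j)]].

Lemma cylinder_measurable S : cylinder S `<=` measurable.
Proof.
move=> _ [B mB <-]; apply: fin_bigcap_measurable; first exact: finite_seq.
by move=> j _; rewrite -[X in measurable X]setTI; exact: mF.
Qed.

Lemma sigma_cylinder_sub S : <<s cylinder S >> `<=` measurable.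
Proof.
apply: smallest_sub; first exact: sigma_algebra_measurable.
exact: cylinder_measurable.
Qed.

Lemma cylinder_setI_closed S : setI_closed (cylinder S).
Proof.
move=> _ _ [B mB <-] [C mC <-]; exists (fun j => B j `&` C j).
  by move=> j; exact: measurableI.
by rewrite -bigcapI.
Qed.

Lemma measurable_cylinder_coord S j : j \in S ->
  measurable_fun setT (F j : g_sigma_algebraType (cylinder S) -> R).
Proof.
move=> jS _ B mB; rewrite setTI; apply: sub_sigma_algebra.
exists (fun i => if i == j then B else setT).
  by move=> i; case: ifP.
apply/seteqP; split => w /=.
  by move=> h; have := h j jS; rewrite eqxx.
by move=> Bw i iS; case: eqP => [->|].
Qed.

Lemma cylinder_indep {S1 S2} : uniq (S1 ++ S2) ->
  forall A B, cylinder S1 A -> cylinder S2 B -> P (A `&` B) = (P A * P B)%E.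
Proof.
move=> uS12 _ _ [B1 mB1 <-] [B2 mB2 <-].
move: (uS12); rewrite cat_uniq => /and3P[uS1 /hasPn S12 uS2].
pose B j := if j \in S1 then B1 j else B2 j.
have mB j : measurable (B j) by rewrite /B; case: ifP.
have -> : \bigcap_(j in [set` S1]) (F j @^-1` B1 j) =
          \bigcap_(j in [set` S1]) (F j @^-1` B j).
  by apply: eq_bigcapr => j /= jS1; rewrite /B jS1.
have -> : \bigcap_(j in [set` S2]) (F j @^-1` B2 j) =
          \bigcap_(j in [set` S2]) (F j @^-1` B j).
  by apply: eq_bigcapr => j /= jS2; rewrite /B (negbTE (S12 j jS2)).
have S12U : [set` S1 ++ S2] = [set` S1] `|` [set` S2].
  by apply/seteqP; split => j /=; rewrite mem_cat => /orP.
by rewrite -bigcap_setU -S12U !indF // bigop.big_cat.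
Qed.

Lemma sigma_cylinder_indep {S1 S2} : uniq (S1 ++ S2) ->
  forall A B, <<s cylinder S1 >> A -> <<s cylinder S2 >> B ->
  P (A `&` B) = (P A * P B)%E.
Proof.
move=> uS12.
have sigma2 := indep_sigma_of_setI_closed P (@cylinder_measurable S1)
  (@cylinder_setI_closed S2) (@sigma_cylinder_sub S2) (cylinder_indep uS12).
move=> A B sA sB; rewrite setIC muleC.
apply: (indep_sigma_of_setI_closed P (@sigma_cylinder_sub S2)
  (@cylinder_setI_closed S1) (@sigma_cylinder_sub S1) _ B A sB sA).
by move=> B' A' sB' cA'; rewrite setIC muleC; exact: sigma2.
Qed.

End cylinder_sets.

Section random_walk.
Context {T : Type} {R : realType} (X Y : nat -> T -> R).

Definition net_loss (n : nat) (w : T) : R := \sum_(k < n) (Y k w - X k w).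

Definition walk_below (u : R) (n : nat) : set T :=
  [set w | forall k, (k <= n)%N -> net_loss k w <= u].

Lemma net_loss0 w : net_loss 0 w = 0.
Proof. by rewrite /net_loss big_ord0. Qed.

Lemma net_lossS n w : net_loss n.+1 w = net_loss n w + (Y n w - X n w).
Proof. by rewrite /net_loss big_ord_recr. Qed.

Lemma walk_belowS u n :
  walk_below u n.+1 = walk_below u n `&` [set w | net_loss n.+1 w <= u].
Proof.
apply/seteqP; split => w /=.
  by move=> below; split => [k kn|]; apply: below => //; exact: leqW.
by move=> [below lastu] k; rewrite leq_eqVlt => /orP[/eqP->|]; last exact: below.
Qed.

Lemma walk_below_subset u m n : (m <= n)%N -> walk_below u n `<=` walk_below u m.
Proof. by move=> mn w below k km; apply: below; exact: leq_trans mn. Qed.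

Lemma surplus_ge_net_loss u (I : nat -> T -> R) n w :
  (forall k, 0 <= I k w) -> walk_below u n w ->
  u - net_loss n w <= surplus u X Y I n w.
Proof.
move=> I0; elim: n => [|n IH] belowS /=; first by rewrite net_loss0 subr0.
have below : walk_below u n w by move: belowS; rewrite walk_belowS => -[].
have IHn := IH below; have := belowS n.+1 (leqnn _).
have S0 : 0 <= surplus u X Y I n w by have := below n (leqnn n); lra.
have : surplus u X Y I n w <= surplus u X Y I n w * (1 + I n w).
  by rewrite mulrDr mulr1 lerDl mulr_ge0.
rewrite net_lossS; lra.
Qed.

Lemma ruin_sub_walk_above u (I : nat -> T -> R) :
  (forall n w, 0 <= I n w) ->
  \bigcup_(n in [set: nat]) [set w | surplus u X Y I n.+1 w < 0] `<=`
  \bigcup_n ~` walk_below u n.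
Proof.
move=> I0 w [n _ ruined]; exists n.+1 => // below.
have : surplus u X Y I n.+1 w < 0 := ruined.
have := @surplus_ge_net_loss u I _ w (I0^~ w) below.
have := below n.+1 (leqnn _); lra.
Qed.

End random_walk.

Section random_walk_measurability.
Context {d} {T : measurableType d} {R : realType} (X Y : nat -> T -> R).

Lemma measurable_net_loss n :
  (forall k, (k < n)%N -> measurable_fun setT (X k)) ->
  (forall k, (k < n)%N -> measurable_fun setT (Y k)) ->
  measurable_fun setT (net_loss X Y n).
Proof.
move=> mX mY; apply: measurable_sum => k.
by apply: measurable_funB; [exact: mY|exact: mX].
Qed.

Lemma measurable_walk_below u n :
  (forall k, (k < n)%N -> measurable_fun setT (X k)) ->
  (forall k, (k < n)%N -> measurable_fun setT (Y k)) ->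
  measurable (walk_below X Y u n).
Proof.
move=> mX mY.
have -> : walk_below X Y u n =
    \bigcap_(k in [set k | (k <= n)%N]) (net_loss X Y k @^-1` `]-oo, u]).
  by apply/seteqP; split => w /= below k /below; rewrite /preimage /= in_itv.
apply: bigcap_measurable => [|k /= kn]; first by exists 0%N.
rewrite -[X in measurable X]setTI.
by apply: measurable_net_loss => // j jk; [apply: mX|apply: mY];
  exact: leq_trans kn.
Qed.

Lemma measurable_surplus (I : nat -> T -> R) u n :
  (forall k, measurable_fun setT (X k)) ->
  (forall k, measurable_fun setT (Y k)) ->
  (forall k, measurable_fun setT (I k)) ->
  measurable_fun setT (surplus u X Y I n).
Proof.
move=> mX mY mI; elim: n => [|n IH] /=; first exact: measurable_cst.
by apply: measurable_funB => //; apply: measurable_funD => //;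
  apply: measurable_funM => //; apply: measurable_funD.
Qed.

Lemma ruin_prob_le_walk_above (P : probability T R) (I : nat -> T -> R) u :
  (forall k, measurable_fun setT (X k)) ->
  (forall k, measurable_fun setT (Y k)) ->
  (forall k, measurable_fun setT (I k)) ->
  (forall n w, 0 <= I n w) ->
  (ruin_prob P u X Y I <= P (\bigcup_n ~` walk_below X Y u n))%E.
Proof.
move=> mX mY mI I0; apply: le_measure; rewrite ?inE.
- apply: bigcup_measurable => n _; rewrite -[X in measurable X]setTI.
  have -> : [set w | surplus u X Y I n.+1 w < 0] =
      surplus u X Y I n.+1 @^-1` `]-oo, 0[.
    by apply/seteqP; split => w /=; rewrite in_itv.
  by apply: measurable_surplus.
- apply: bigcup_measurable => n _; apply: measurableC.
  by apply: measurable_walk_below.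
- exact: ruin_sub_walk_above.
Qed.

End random_walk_measurability.

Section lundberg_inequality.
Context {d} {T : measurableType d} {R : realType} (P : probability T R)
  {X Y I : nat -> T -> R}.
Hypothesis mX : forall n, measurable_fun setT (X n).
Hypothesis mY : forall n, measurable_fun setT (Y n).
Hypothesis mI : forall n, measurable_fun setT (I n).
Hypothesis indXYI : mutually_independent P (join3 X Y I).
Hypothesis idX : identically_distributed P X.
Hypothesis idY : identically_distributed P Y.
Context {Rc : R} (u : R).
Hypothesis Rc_ge0 : 0 <= Rc.
Hypothesis lundberg_coef :
  (\int[P]_w (expR (Rc * (Y 0%N w - X 0%N w)))%:E <= 1)%E.

Let F := join3 X Y I.
Let mF j : measurable_fun setT (F j). Proof. by case: j => [[]|]. Qed.
Let xi k : nat + nat + nat := inl (inl k).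
Let yi k : nat + nat + nat := inl (inr k).
Let past N := [seq xi k | k <- iota 0 N] ++ [seq yi k | k <- iota 0 N].
Let present N := [:: xi N; yi N].

Let xi_inj : injective xi. Proof. by move=> ? ? []. Qed.
Let yi_inj : injective yi. Proof. by move=> ? ? []. Qed.
Let xi_notin_yi k s : xi k \notin [seq yi j | j <- s].
Proof. by apply/mapP => -[]. Qed.
Let yi_notin_xi k s : yi k \notin [seq xi j | j <- s].
Proof. by apply/mapP => -[]. Qed.

Let xi_past k N : (xi k \in past N) = (k < N)%N.
Proof. by rewrite mem_cat (mem_map xi_inj) mem_iota (negbTE (xi_notin_yi _ _)) orbF. Qed.

Let yi_past k N : (yi k \in past N) = (k < N)%N.
Proof. by rewrite mem_cat (mem_map yi_inj) mem_iota (negbTE (yi_notin_xi _ _)). Qed.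

Let uniq_past_present N : uniq (past N ++ present N).
Proof.
rewrite cat_uniq /= xi_past yi_past ltnn /= !andbT.
rewrite cat_uniq (map_inj_uniq xi_inj) (map_inj_uniq yi_inj) iota_uniq /= andbT.
by apply/hasPn => _ /mapP[k _ ->]; exact: yi_notin_xi.
Qed.

Local Notation Past N := (g_sigma_algebraType (cylinder F (past N))).
Local Notation Present N := (g_sigma_algebraType (cylinder F (present N))).

Let sigma_past_sub N := sigma_cylinder_sub F mF (past N).
Let sigma_present_sub N := sigma_cylinder_sub F mF (present N).

Let past_measurable_X N k : (k < N)%N -> measurable_fun setT (X k : Past N -> R).
Proof.
by move=> kN; apply: (measurable_cylinder_coord F (past N) (xi k)); rewrite xi_past.
Qed.

Let past_measurable_Y N k : (k < N)%N -> measurable_fun setT (Y k : Past N -> R).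
Proof.
by move=> kN; apply: (measurable_cylinder_coord F (past N) (yi k)); rewrite yi_past.
Qed.

Let past_measurable_walk_below N : measurable (walk_below X Y u N : set (Past N)).
Proof. exact: measurable_walk_below (past_measurable_X N) (past_measurable_Y N). Qed.

Let past_measurable_net_loss N : measurable_fun setT (net_loss X Y N : Past N -> R).
Proof. exact: measurable_net_loss (past_measurable_X N) (past_measurable_Y N). Qed.

Let alive N w := \1_(walk_below X Y u N) w * expR (Rc * net_loss X Y N w).
Let crossed N w := \1_(~` walk_below X Y u N) w * expR (Rc * u).
Let stopped N w := alive N w + crossed N w.
Let increment N w := expR (Rc * (Y N w - X N w)).

Let alive_ge0 N w : 0 <= alive N w.
Proof. by rewrite mulr_ge0 ?expR_ge0. Qed.
Let crossed_ge0 N w : 0 <= crossed N w.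
Proof. by rewrite mulr_ge0 ?expR_ge0. Qed.
Let stopped_ge0 N w : 0 <= stopped N w.
Proof. exact: addr_ge0. Qed.
Let increment_ge0 N w : 0 <= increment N w.
Proof. exact: expR_ge0. Qed.

Let past_measurable_alive N : measurable_fun setT (alive N : Past N -> R).
Proof.
apply: measurable_funM; first exact: measurable_indic.
apply: measurableT_comp; first exact: measurable_expR.
by apply: measurable_funM; [exact: measurable_cst|exact: past_measurable_net_loss].
Qed.

Let past_measurable_crossed N : measurable_fun setT (crossed N : Past N -> R).
Proof.
apply: measurable_funM; last exact: measurable_cst.
by apply: measurable_indic; exact: measurableC.
Qed.

Let present_measurable_increment N : measurable_fun setT (increment N : Present N -> R).
Proof.
apply: measurableT_comp; first exact: measurable_expR.
apply: measurable_funM; first exact: measurable_cst.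
apply: measurable_funB.
- by apply: (measurable_cylinder_coord F (present N) (yi N)); rewrite !inE eqxx orbT.
- by apply: (measurable_cylinder_coord F (present N) (xi N)); rewrite !inE eqxx.
Qed.

Let integral_increment_split N : (\int[P]_w (increment N w)%:E =
  \int[P]_w (expR (Rc * Y N w))%:E * \int[P]_w (expR (- (Rc * X N w)))%:E)%E.
Proof.
have uYX : uniq ([:: yi N] ++ [:: xi N]) by [].
rewrite -(ge0_integralM_indep P (sigma_cylinder_sub F mF [:: yi N])
  (sigma_cylinder_sub F mF [:: xi N]) (sigma_cylinder_indep P F mF indXYI uYX)).
- by apply: eq_integral => w _; rewrite /increment mulrBr expRD.
- by move=> w; exact: expR_ge0.
- by move=> w; exact: expR_ge0.
- apply: measurableT_comp; first exact: measurable_expR.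
  apply: measurable_funM; first exact: measurable_cst.
  by apply: (measurable_cylinder_coord F [:: yi N] (yi N)); rewrite inE.
- apply: measurableT_comp; first exact: measurable_expR.
  apply: measurable_funN; apply: measurable_funM; first exact: measurable_cst.
  by apply: (measurable_cylinder_coord F [:: xi N] (xi N)); rewrite inE.
Qed.

Let integral_increment_le1 N : (\int[P]_w (increment N w)%:E <= 1)%E.
Proof.
have mexp (c : R) : measurable_fun setT (fun y : R => expR (c * y)).
  by apply: measurableT_comp; [exact: measurable_expR|exact: measurable_funM].
have mexpN (c : R) : measurable_fun setT (fun y : R => expR (- (c * y))).
  apply: measurableT_comp; first exact: measurable_expR.
  exact/measurable_funN/measurable_funM.
rewrite integral_increment_split.
rewrite (ge0_integral_comp_eq_law P (mY N) (mY 0) (mexp Rc) (fun _ => expR_ge0 _)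
  (idY N)).
rewrite (ge0_integral_comp_eq_law P (mX N) (mX 0) (mexpN Rc) (fun _ => expR_ge0 _)
  (idX N)).
by rewrite -integral_increment_split.
Qed.

Let stopped0_le1 w : stopped 0 w <= 1.
Proof.
rewrite /stopped /alive /crossed !indicE in_setC net_loss0 mulr0 expR0 mulr1.
have [D0|notD0] := boolP (w \in walk_below X Y u 0).
  by rewrite mul0r addr0.
rewrite mul1r add0r -expR0 ler_expR mulr_ge0_le0 // ltW // ltNge.
apply: contra notD0 => u_ge0; rewrite inE => k.
by rewrite leqn0 => /eqP ->; rewrite net_loss0.
Qed.

Let stoppedS_le N w : stopped N.+1 w <= crossed N w + alive N w * increment N w.
Proof.
rewrite /stopped /alive /crossed /increment !indicE !in_setC walk_belowS in_setI.
have [DN|notDN] /= := boolP (w \in walk_below X Y u N); last first.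
  by rewrite !mul0r !mul1r addr0 add0r.
rewrite mul1r mul0r add0r -expRD -mulrDr -net_lossS.
have [below|above] /= := boolP (w \in [set w | net_loss X Y N.+1 w <= u]).
  by rewrite mul1r mul0r addr0.
rewrite mul0r mul1r add0r ler_expR ler_wpM2l // ltW // ltNge.
by apply: contra above; rewrite inE.
Qed.

Let measurable_alive N : measurable_fun setT (alive N).
Proof.
exact: measurable_fun_sub_sigma (sigma_past_sub N) (past_measurable_alive N).
Qed.

Let measurable_crossed N : measurable_fun setT (crossed N).
Proof.
exact: measurable_fun_sub_sigma (sigma_past_sub N) (past_measurable_crossed N).
Qed.

Let measurable_stopped N : measurable_fun setT (stopped N).
Proof. exact: measurable_funD. Qed.

Let measurable_increment N : measurable_fun setT (increment N).
Proof.
exact: measurable_fun_sub_sigma (sigma_present_sub N) (present_measurable_increment N).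
Qed.

Let integral_stoppedS_le N :
  (\int[P]_w (stopped N.+1 w)%:E <= \int[P]_w (stopped N w)%:E)%E.
Proof.
have m_alive_incr : measurable_fun setT (fun w => alive N w * increment N w).
  exact: measurable_funM.
apply: (@le_trans _ _ (\int[P]_w (crossed N w + alive N w * increment N w)%:E)%E).
  apply: ge0_le_integral => //= [w _|||w _]; rewrite ?lee_fin ?stopped_ge0 //.
  - exact/measurable_EFinP.
  - by apply/measurable_EFinP; exact: measurable_funD.
under eq_integral do rewrite EFinD.
rewrite ge0_integralD //; last 4 first.
- by move=> w _; rewrite lee_fin.
- exact/measurable_EFinP.
- by move=> w _; rewrite lee_fin mulr_ge0.
- exact/measurable_EFinP.
rewrite (ge0_integralM_indep P (h := alive N) (g := increment N)
  (sigma_past_sub N) (sigma_present_sub N)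
  (sigma_cylinder_indep P F mF indXYI (uniq_past_present N))) //.
under [X in (_ <= X)%E]eq_integral do rewrite EFinD.
rewrite [X in (_ <= X)%E]ge0_integralD //; last 4 first.
- by move=> w _; rewrite lee_fin.
- exact/measurable_EFinP.
- by move=> w _; rewrite lee_fin.
- exact/measurable_EFinP.
rewrite addeC leeD2r // muleC gee_pMl //.
- have int_incr_ge0 : (0 <= \int[P]_w (increment N w)%:E)%E.
    by apply: integral_ge0 => w _; rewrite lee_fin.
  by rewrite ge0_fin_numE // (le_lt_trans (integral_increment_le1 N)) ?ltey.
- by apply: integral_ge0 => w _; rewrite lee_fin.
Qed.

Let integral_stopped_le1 N : (\int[P]_w (stopped N w)%:E <= 1)%E.
Proof.
elim: N => [|N IH]; last exact: le_trans (integral_stoppedS_le N) IH.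
apply: (@le_trans _ _ (\int[P]_w 1)%E).
  apply: ge0_le_integral => //= [w _||w _];
    rewrite ?lee_fin ?stopped_ge0 ?stopped0_le1 //.
  exact/measurable_EFinP.
by rewrite integral_cst //= mul1e probability_setT.
Qed.

Let measurable_walk_above N : measurable (~` walk_below X Y u N).
Proof.
exact: sigma_past_sub (@measurableC _ (Past N) _ (past_measurable_walk_below N)).
Qed.

Let walk_above_prob_le N :
  (P (~` walk_below X Y u N) <= (expR (- Rc * u))%:E)%E.
Proof.
have int_crossed : (\int[P]_w (crossed N w)%:E =
    P (~` walk_below X Y u N) * (expR (Rc * u))%:E)%E.
  under eq_integral do rewrite EFinM.
  rewrite ge0_integralZr //; last exact/measurable_EFinP/measurable_indic.
  by rewrite integral_indic // setIT.
have : (\int[P]_w (crossed N w)%:E <= 1)%E.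
  apply: le_trans (integral_stopped_le1 N); apply: ge0_le_integral => //.
  - by move=> w _; rewrite lee_fin.
  - exact/measurable_EFinP.
  - exact/measurable_EFinP.
  - by move=> w _; rewrite lee_fin lerDr.
rewrite int_crossed.
have : P (~` walk_below X Y u N) \is a fin_num by rewrite fin_num_measure.
case: (P _) => [p _| |] //=; rewrite !lee_fin.
by rewrite mulNr expRN -div1r ler_pdivlMr // expR_gt0.
Qed.

Lemma lundberg_walk_above :
  (P (\bigcup_n ~` walk_below X Y u n) <= (expR (- Rc * u))%:E)%E.
Proof.
have nd : nondecreasing_seq (fun n => ~` walk_below X Y u n).
  by move=> m n mn; apply/subsetPset/subsetC; exact: walk_below_subset.
have mU : measurable (\bigcup_n ~` walk_below X Y u n).
  by apply: bigcup_measurable => n _.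
have cvg_mu := @nondecreasing_cvg_mu _ _ _ P _ measurable_walk_above mU nd.
rewrite -(cvg_lim _ cvg_mu) //; apply: lime_le; first exact: cvgP cvg_mu.
by apply: nearW => n; exact: walk_above_prob_le.
Qed.

End lundberg_inequality.

Theorem mainTheorem7 (d : measure_display) (T : measurableType d)
  (R : realType) (P : probability T R)
  (X Y I : nat -> {RV P >-> R}) (Rc : R) :
  (forall n w, 0 <= X n w) -> (forall n w, 0 <= Y n w) ->
  (forall n w, 0 <= I n w) ->
  (forall n, P.-integrable setT (EFin \o X n)) ->
  (forall n, P.-integrable setT (EFin \o Y n)) ->
  (forall n, P.-integrable setT (EFin \o I n)) ->
  identically_distributed P (fun n => X n : T -> R) ->
  identically_distributed P (fun n => Y n : T -> R) ->
  identically_distributed P (fun n => I n : T -> R) ->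
  mutually_independent P
    (join3 (fun n => X n : T -> R) (fun n => Y n : T -> R)
           (fun n => I n : T -> R)) ->
  0 < Rc ->
  ('E_P[fun w => expR (Rc * (Y 0%N w - X 0%N w))] <= 1)%E ->
  forall u : R, 0 < u ->
    (ruin_prob P u (fun n => X n : T -> R) (fun n => Y n : T -> R)
       (fun n => I n : T -> R) <= (expR (- Rc * u))%:E)%E.
Proof.
move=> _ _ I_ge0 _ _ _ idX idY _ indXYI Rc_gt0 lundberg_coef u _.
have mX n : measurable_fun setT (X n) by exact: measurable_funP.
have mY n : measurable_fun setT (Y n) by exact: measurable_funP.
have mI n : measurable_fun setT (I n) by exact: measurable_funP.
apply: le_trans (ruin_prob_le_walk_above _ _ _ _ _ mX mY mI I_ge0) _.
apply: (lundberg_walk_above P mX mY mI indXYI idX idY u (ltW Rc_gt0)).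
by move: lundberg_coef; rewrite expectation.unlock.
Qed.
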